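(* Let $T:X\rightrightarrows X^*$ be a multivalued operator such that $T+\alpha^*$ is pre-maximal pseudomonotone for every $\alpha^*\in X^*$. Then $T$ is pre-maximal monotone and $T^\mu$ is pre-maximal pseudomonotone.
   Context: $X$ is a real Banach space with dual $X^*$ and pairing $\langle x,x^*\rangle=x^*(x)$. A multivalued operator $T:X\rightrightarrows X^*$ is identified with its graph $T\subset X\times X^*$; $T+\alpha^*$ denotes the operator $x\mapsto T(x)+\alpha^*=\{x^*+\alpha^*:x^*\in T(x)\}$. The monotone polar is $T^\mu=\{(x,x^* ): \langle x-y,x^*-y^*\rangle\ge0\ \forall (y,y^* )\in T\}$; $T$ is monotone if $\langle x-y,x^*-y^*\rangle\ge0$ for all $(x,x^* ),(y,y^* )\in T$; $T$ is pre-maximal monotone if both $T$ and $T^\mu$ are monotone. For $(x,x^* ),(y,y^* )\in X\times X^*$, write $(x,x^* )\sim_p(y,y^* )$ if either $\min\{\langle x-y,y^*\rangle,\langle y-x,x^*\rangle\}<0$ or $\langle x-y,y^*\rangle=\langle y-x,x^*\rangle=0$; the pseudomonotone polar is $T^\rho=\{(x,x^* ): (x,x^* )\sim_p(y,y^* )\ \forall (y,y^* )\in T\}$. $T$ is pseudomonotone if for all $(x,x^* ),(y,y^* )\in T$, $\langle y-x,x^*\rangle\ge0$ implies $\langle y-x,y^*\rangle\ge0$; $T$ is pre-maximal pseudomonotone if both $T$ and $T^\rho$ are pseudomonotone. *)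

From Stdlib Require Import Reals.
Open Scope R_scope.

Record BanachSpace := {
  bcar :> Type;
  bzero : bcar;
  badd : bcar -> bcar -> bcar;
  bopp : bcar -> bcar;
  bscal : R -> bcar -> bcar;
  bnorm : bcar -> R;
  badd_assoc : forall x y z, badd x (badd y z) = badd (badd x y) z;
  badd_comm : forall x y, badd x y = badd y x;
  badd_0 : forall x, badd x bzero = x;
  badd_opp : forall x, badd x (bopp x) = bzero;
  bscal_assoc : forall a b x, bscal a (bscal b x) = bscal (a * b) x;
  bscal_1 : forall x, bscal 1 x = x;
  bscal_distr_l : forall a x y, bscal a (badd x y) = badd (bscal a x) (bscal a y);
  bscal_distr_r : forall a b x, bscal (a + b) x = badd (bscal a x) (bscal b x);
  bnorm_eq0 : forall x, bnorm x = 0 -> x = bzero;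
  bnorm_scal : forall a x, bnorm (bscal a x) = Rabs a * bnorm x;
  bnorm_triangle : forall x y, bnorm (badd x y) <= bnorm x + bnorm y;
  bcomplete : forall u : nat -> bcar,
    (forall eps, 0 < eps -> exists N, forall m n, (N <= m)%nat -> (N <= n)%nat ->
        bnorm (badd (u m) (bopp (u n))) < eps) ->
    exists l, forall eps, 0 < eps -> exists N, forall n, (N <= n)%nat ->
        bnorm (badd (u n) (bopp l)) < eps
}.

Definition bsub {X : BanachSpace} (x y : X) : X := badd X x (bopp X y).

Record dual (X : BanachSpace) := {
  dfun :> X -> R;
  dfun_add : forall x y, dfun (badd X x y) = dfun x + dfun y;
  dfun_scal : forall a x, dfun (bscal X a x) = a * dfun x;
  dfun_bounded : exists M, forall x, Rabs (dfun x) <= M * bnorm X x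
}.

Definition pairing {X : BanachSpace} (x : X) (xs : dual X) : R := dfun X xs x.

(* A multivalued operator T : X => dual X, identified with its graph. *)
Definition operator (X : BanachSpace) := X -> dual X -> Prop.

Definition shift_op {X : BanachSpace} (T : operator X) (a : dual X) : operator X :=
  fun x zs => exists xs, T x xs /\ forall v : X, dfun X zs v = dfun X xs v + dfun X a v.

(* <x - y, xs - ys> written out via linearity *)
Definition mono_pair {X : BanachSpace} (x : X) (xs : dual X) (y : X) (ys : dual X) : R :=
  pairing (bsub x y) xs - pairing (bsub x y) ys.

Definition monotone {X : BanachSpace} (T : operator X) : Prop :=
  forall x xs y ys, T x xs -> T y ys -> 0 <= mono_pair x xs y ys.

Definition mono_polar {X : BanachSpace} (T : operator X) : operator X :=
  fun x xs => forall y ys, T y ys -> 0 <= mono_pair x xs y ys.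

Definition pre_maximal_monotone {X : BanachSpace} (T : operator X) : Prop :=
  monotone T /\ monotone (mono_polar T).

Definition pseudo_rel {X : BanachSpace} (x : X) (xs : dual X) (y : X) (ys : dual X) : Prop :=
  Rmin (pairing (bsub x y) ys) (pairing (bsub y x) xs) < 0 \/
  (pairing (bsub x y) ys = 0 /\ pairing (bsub y x) xs = 0).

Definition pseudo_polar {X : BanachSpace} (T : operator X) : operator X :=
  fun x xs => forall y ys, T y ys -> pseudo_rel x xs y ys.

Definition pseudomonotone {X : BanachSpace} (T : operator X) : Prop :=
  forall x xs y ys, T x xs -> T y ys ->
    0 <= pairing (bsub y x) xs -> 0 <= pairing (bsub y x) ys.

Definition pre_maximal_pseudomonotone {X : BanachSpace} (T : operator X) : Prop :=
  pseudomonotone T /\ pseudomonotone (pseudo_polar T).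

(* Subtracting x^* from T turns the pair (x, x^* ) into (x, 0), against which
   pseudomonotonicity is exactly monotonicity: since <y - x, 0> >= 0 always holds,
   pseudomonotonicity of T - x^* forces <y - x, y^* - x^* > >= 0.  The same argument
   applies to T^mu, because (T + a)^rho contains T^mu + a: on a monotone pair the
   two quantities in the definition of ~_p sum to a non-positive number.  Finally,
   T monotone gives T inside T^mu, hence (T^mu)^rho inside T^rho = (T + 0)^rho. *)

From Stdlib Require Import Reals Lra.
Open Scope R_scope.

Section DualSpace.

Context {X : BanachSpace}.

Lemma dfun_bzero (f : dual X) : dfun X f (bzero X) = 0.
Proof.
  pose proof (dfun_add X f (bzero X) (bzero X)) as H.
  rewrite badd_0 in H. lra.
Qed.

Lemma dfun_bopp (f : dual X) (x : X) : dfun X f (bopp X x) = - dfun X f x.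
Proof.
  pose proof (dfun_add X f x (bopp X x)) as H.
  rewrite badd_opp, dfun_bzero in H. lra.
Qed.

Lemma dfun_bsub (f : dual X) (x y : X) : dfun X f (bsub x y) = dfun X f x - dfun X f y.
Proof. unfold bsub. rewrite dfun_add, dfun_bopp. ring. Qed.

Definition dual_zero : dual X.
Proof.
  refine {| dfun := fun _ => 0 |}.
  - intros; ring.
  - intros; ring.
  - exists 0. intros. rewrite Rabs_R0. lra.
Defined.

Definition dual_sub (f g : dual X) : dual X.
Proof.
  refine {| dfun := fun v => dfun X f v - dfun X g v |}.
  - intros. rewrite !dfun_add. ring.
  - intros. rewrite !dfun_scal. ring.
  - destruct (dfun_bounded X f) as [Mf Hf], (dfun_bounded X g) as [Mg Hg].
    exists (Mf + Mg). intros v.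
    eapply Rle_trans; [unfold Rminus; apply Rabs_triang |].
    rewrite Rabs_Ropp. specialize (Hf v). specialize (Hg v). lra.
Defined.

End DualSpace.

Section Operators.

Context {X : BanachSpace}.
Implicit Types (S T : operator X) (x y : X) (xs ys u v a : dual X).

Lemma mono_pairE x xs y ys :
  mono_pair x xs y ys = pairing (bsub y x) ys - pairing (bsub y x) xs.
Proof. unfold mono_pair, pairing. rewrite !dfun_bsub. ring. Qed.

Lemma mono_pair_shift x xs y ys u v a :
  (forall w, dfun X u w = dfun X xs w + dfun X a w) ->
  (forall w, dfun X v w = dfun X ys w + dfun X a w) ->
  mono_pair x u y v = mono_pair x xs y ys.
Proof.
  intros Hu Hv. unfold mono_pair, pairing. rewrite !Hu, !Hv, !dfun_bsub. ring.
Qed.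

Lemma pseudo_rel_of_mono_pair x xs y ys :
  0 <= mono_pair x xs y ys -> pseudo_rel x xs y ys.
Proof.
  unfold mono_pair, pseudo_rel, pairing. rewrite !dfun_bsub. intros Hm.
  destruct (Rlt_dec (dfun X ys x - dfun X ys y) 0) as [Hneg | Hnneg].
  - left. eapply Rle_lt_trans; [apply Rmin_l | lra].
  - destruct (Rlt_dec (dfun X xs y - dfun X xs x) 0).
    + left. eapply Rle_lt_trans; [apply Rmin_r | lra].
    + right. lra.
Qed.

Lemma pseudo_rel_ext x xs y ys v :
  (forall w, dfun X v w = dfun X ys w) -> pseudo_rel x xs y ys -> pseudo_rel x xs y v.
Proof. intros Hv. unfold pseudo_rel, pairing. rewrite !Hv. tauto. Qed.

Lemma pseudomonotone_sub {S S'} :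
  (forall x xs, S x xs -> S' x xs) -> pseudomonotone S' -> pseudomonotone S.
Proof. intros HS HS' x xs y ys Sx Sy. apply HS'; auto. Qed.

Lemma monotone_pseudomonotone T : monotone T -> pseudomonotone T.
Proof.
  intros HT x xs y ys Tx Ty Hxs. specialize (HT x xs y ys Tx Ty).
  rewrite mono_pairE in HT. lra.
Qed.

Lemma monotone_sub_mono_polar T x xs : monotone T -> T x xs -> mono_polar T x xs.
Proof. intros HT Tx y ys Ty. exact (HT x xs y ys Tx Ty). Qed.

Lemma monotone_of_shifts_pseudomonotone T :
  (forall a, pseudomonotone (shift_op T a)) -> monotone T.
Proof.
  intros H x xs y ys Tx Ty.
  set (a := dual_sub dual_zero xs).
  assert (Hx : shift_op T a x dual_zero).
  { exists xs. split; [exact Tx | intros w; simpl; ring]. }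
  assert (Hy : shift_op T a y (dual_sub ys xs)).
  { exists ys. split; [exact Ty | intros w; simpl; ring]. }
  assert (Hdiff : 0 <= pairing (bsub y x) (dual_sub ys xs)).
  { apply (H a x dual_zero y (dual_sub ys xs) Hx Hy). unfold pairing; simpl; lra. }
  rewrite mono_pairE. unfold pairing in *. simpl in Hdiff. lra.
Qed.

Lemma shift_mono_polar_sub_pseudo_polar T a x u :
  shift_op (mono_polar T) a x u -> pseudo_polar (shift_op T a) x u.
Proof.
  intros [xs [Mx Hu]] y v [ys [Ty Hv]].
  apply pseudo_rel_of_mono_pair.
  rewrite (mono_pair_shift x xs y ys u v a Hu Hv). exact (Mx y ys Ty).
Qed.

Lemma pseudo_polar_mono_polar_sub T :
  monotone T -> forall x xs, pseudo_polar (mono_polar T) x xs ->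
  pseudo_polar (shift_op T dual_zero) x xs.
Proof.
  intros HT x xs Px y v [ys [Ty Hv]].
  apply (pseudo_rel_ext x xs y ys v).
  - intros w. rewrite Hv. simpl. ring.
  - exact (Px y ys (monotone_sub_mono_polar T y ys HT Ty)).
Qed.

End Operators.

Theorem mainTheorem12 (X : BanachSpace) (T : operator X) :
  (forall a : dual X, pre_maximal_pseudomonotone (shift_op T a)) ->
  pre_maximal_monotone T /\ pre_maximal_pseudomonotone (mono_polar T).
Proof.
  intros H.
  assert (HT : monotone T).
  { apply monotone_of_shifts_pseudomonotone. intros a. exact (proj1 (H a)). }
  assert (HTmu : monotone (mono_polar T)).
  { apply monotone_of_shifts_pseudomonotone. intros a.
    apply (pseudomonotone_sub (shift_mono_polar_sub_pseudo_polar T a)).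
    exact (proj2 (H a)). }
  split; [split; assumption | split].
  - exact (monotone_pseudomonotone _ HTmu).
  - apply (pseudomonotone_sub (pseudo_polar_mono_polar_sub T HT)).
    exact (proj2 (H dual_zero)).
Qed.
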